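(* With notation as in the context, suppose the edge localization graph $\bar{\mathcal{G}}$ has an oriented spanning tree with root $r$, and $r$ knows the bearing vector $\mathbf{g}_{v_1 r}$ to one of its neighbors $v_1$ in $\bar{\mathcal{G}}$. Let $l$ be the edge agent corresponding to the edge $(r,v_1)\in\bar{\mathcal{E}}$, and run the estimation dynamics $\dot{\hat z}_k(t)=\sum_{j\in\mathcal{N}_k}\bigl(e^{-\mathrm{i}\theta_{jk}}\hat z_j(t)-\hat z_k(t)\bigr)$ for all $k\neq l$, while the edge agent $l$ does not update, i.e. $\hat z_l(t)=z_l$ for all $t\ge t_0$ (the other initial estimates $\hat z_k(t_0)$ being arbitrary). Then the estimate $\hat{\mathbf{z}}(t)=[\hat z_1(t),\dots,\hat z_M(t)]^T$ converges exponentially to the true value $\mathbf{z}$.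
   Context: Setting. There are $N$ agents $\mathcal{V}=\{1,\dots,N\}$ at distinct positions $\mathbf{p}_u\in\mathbb{R}^2$. The bearing vector is $\mathbf{g}_{vu}=(\mathbf{p}_v-\mathbf{p}_u)/\|\mathbf{p}_v-\mathbf{p}_u\|$ and $\angle\mathbf{g}_{vu}\in[-\pi,\pi)$ its angle in a fixed global frame. For distinct agents $u,v,w$, $\alpha^{u}_{wv}\in[-\pi,\pi)$ denotes the counterclockwise angle at $u$ from $\mathbf{g}_{vu}$ to $\mathbf{g}_{wu}$. A set $\mathcal{S}$ of measured subtended angles is given, with $\alpha^{u}_{wv}\in\mathcal{S}$ iff $\alpha^{u}_{vw}\in\mathcal{S}$. Standing assumption: if an agent measures subtended angles between two or more pairs of other agents, all bearing vectors associated with these measurements are related to each other through them (so that the subtended angle at that agent between any two of these agents is determined by its measurements). The communication graph $\mathcal{G}=(\mathcal{V},\mathcal{E})$ has as edges exactly the ordered pairs $(u,v),(v,u),(u,w),(w,u)$ for all $\alpha^{u}_{wv}\in\mathcal{S}$; it is symmetric and assumed connected. Edge localization graph $\bar{\mathcal{G}}=(\bar{\mathcal{V}},\bar{\mathcal{E}})$: for each $(u,v)\in\mathcal{E}$ with no $w$ such that $\alpha^{v}_{wu}\in\mathcal{S}$, introduce a new virtual vertex $\bar v^{u}$ (distinct for distinct such pairs), co-located with agent $v$; $\bar{\mathcal{E}}$ is obtained from $\mathcal{E}$ by replacing each such pair $(u,v),(v,u)$ by $(u,\bar v^{u}),(\bar v^{u},u)$; $\bar{\mathcal{V}}$ consists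 of the agents that measure at least one subtended angle together with all virtual vertices. For $a\in\bar{\mathcal{V}}$ let $\rho(a)$ be the real agent it is (co-located with): $\rho(\bar v^u)=v$, $\rho(v)=v$; bearing vectors involving virtual vertices are those of the corresponding real agents. The directed line graph $L(\bar{\mathcal{G}})$ has vertex set $\bar{\mathcal{E}}$ and an edge $(e_1,e_2)$ whenever the head of $e_1$ equals the tail of $e_2$. The localization interaction graph $\mathcal{G}'=(\mathcal{V}',\mathcal{E}')$ is $L(\bar{\mathcal{G}})$ with vertices relabelled by a bijection onto $\mathcal{V}'=\{1,\dots,M\}$, $M=|\bar{\mathcal{E}}|$; vertex $k$ corresponding to $(a,b)\in\bar{\mathcal{E}}$ is the edge agent $k$; its neighbor set is $\mathcal{N}_k=\{j:(k,j)\in\mathcal{E}'\}$. For edge agent $k$ corresponding to $(a,b)$ set $\theta_k=\angle\mathbf{g}_{\rho(b)\rho(a)}$ and $z_k=e^{\mathrm{i}\theta_k}$, $\mathbf{z}=[z_1,\dots,z_M]^T$. For $j\in\mathcal{N}_k$ with $j$ corresponding to $(b,c)$, write $u=\rho(a)$, $v=\rho(b)$, $w=\rho(c)$ and set $\theta_{jk}=\mathrm{PV}(\alpha^{v}_{wu}+\pi)$ if $w\neq u$ and $\theta_{jk}=-\pi$ if $w=u$, where $\mathrm{PV}(\theta)=[(\theta+\pi)\bmod 2\pi]-\pi$. An oriented spanning tree of a directed graph with root $r$ is an acyclic subgraph containing all vertices in which every vertex other than $r$ has a directed path to $r$. *)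

From Stdlib Require Import Reals ClassicalEpsilon.
From Coquelicot Require Import Coquelicot.
From mathcomp Require Import ssreflect ssrfun ssrbool eqtype ssrnat seq
  choice fintype fingraph.

Set Implicit Arguments.
Unset Strict Implicit.
Unset Printing Implicit Defensive.

Local Open Scope R_scope.

Definition vnorm (x : R * R) : R := sqrt (fst x * fst x + snd x * snd x).

Definition vangle (x : R * R) : R :=
  epsilon (inhabits 0%R)
    (fun th => - PI <= th < PI /\
               vnorm x * cos th = fst x /\ vnorm x * sin th = snd x).

Definition Rmod (x m : R) : R := x - m * IZR (Int_part (x / m)).

Definition PV (th : R) : R := Rmod (th + PI) (2 * PI) - PI.

Definition cis (th : R) : C := (cos th, sin th).

Section Agents.
Variable N : nat.
Variable p : 'I_N -> R * R.

Definition bearing (v u : 'I_N) : R * R :=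
  let d := (fst (p v) - fst (p u), snd (p v) - snd (p u)) in
  (fst d / vnorm d, snd d / vnorm d).

Definition bangle (v u : 'I_N) : R := vangle (bearing v u).

(* alpha^u_{wv}: counterclockwise angle at u from g_{vu} to g_{wu}, in [-pi,pi) *)
Definition alpha (u w v : 'I_N) : R := PV (bangle w u - bangle v u).

(* The measurement set S: S u w v = true  iff  alpha^u_{wv} \in S. *)
Variable S : 'I_N -> 'I_N -> 'I_N -> bool.

Definition meas (u v : 'I_N) : bool := [exists w, S u w v].

Definition commE : rel 'I_N := fun u v => meas u v || meas v u.

(* vertices: inl v = real agent v ; inr (u,v) = virtual vertex \bar v^u *)
Definition vbar := ('I_N + ('I_N * 'I_N))%type.

Definition rho (a : vbar) : 'I_N :=
  match a with inl v => v | inr (_, v) => v end.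

Definition inVbar (a : vbar) : bool :=
  match a with
  | inl v => [exists x, meas v x]
  | inr (u, v) => commE u v && ~~ meas v u
  end.

Definition ebar : rel vbar := fun a b =>
  match a, b with
  | inl u, inl v => meas u v && meas v u
  | inl u, inr (u', v) => (u' == u) && commE u v && ~~ meas v u
  | inr (u', v), inl u => (u' == u) && commE u v && ~~ meas v u
  | inr _, inr _ => false
  end.

Definition oriented_spanning_tree (T : rel vbar) (r : vbar) : Prop :=
  inVbar r /\
  (forall a b, T a b -> ebar a b) /\
  (forall a b, T a b -> ~~ connect T b a) /\
  (forall a, inVbar a -> a != r -> connect T a r).

Variable M : nat.
(* lab k = the edge of Gbar corresponding to edge agent k *)
Variable lab : 'I_M -> vbar * vbar.

Definition is_labelling : Prop :=
  injective lab /\ (forall e, ebar e.1 e.2 <-> exists k, lab k = e).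

Definition nbr (k j : 'I_M) : bool := (lab k).2 == (lab j).1.

Definition theta (k : 'I_M) : R := bangle (rho (lab k).2) (rho (lab k).1).
Definition ztrue (k : 'I_M) : C := cis (theta k).

Definition theta_rel (j k : 'I_M) : R :=
  let u := rho (lab k).1 in
  let v := rho (lab k).2 in
  let w := rho (lab j).2 in
  if w == u then - PI else PV (alpha v w u + PI).

Definition Csum (f : 'I_M -> C) (s : seq 'I_M) : C :=
  foldr (fun j acc => Cplus (f j) acc) (RtoC 0) s.

Definition est_rhs (zh : 'I_M -> C) (k : 'I_M) : C :=
  Csum (fun j => Cminus (Cmult (cis (- theta_rel j k)) (zh j)) (zh k))
       [seq j <- enum 'I_M | nbr k j].

End Agents.

(* For j in N_k the weight e^{-i theta_jk} rotates the true value z_j onto z_k, so the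
   errors e_k = zh_k - z_k obey the same rotated consensus dynamics, e_l = 0, and
   d/dt |e_k|^2 <= sum_{j in N_k} (|e_j|^2 - |e_k|^2).  The oriented spanning tree lets
   every edge agent reach l in the localization interaction graph, which yields a depth
   function d such that each k <> l has a neighbour of smaller depth.  With a = 1/(M+2)
   and mu = a^(max d), a first-crossing argument keeps |e_k(t)|^2 below the barrier
   c (1 - a^(d k)) e^{-mu (t - t0)}: at a first touching time the neighbour of smaller
   depth pushes the derivative of |e_k|^2 strictly below that of the barrier. *)

From Stdlib Require Import Reals Lra Lia ZArith Psatz ClassicalEpsilon Classical.
From Coquelicot Require Import Coquelicot.
From mathcomp Require Import ssreflect ssrfun ssrbool eqtype ssrnat seq
  fintype path fingraph bigop.

Set Implicit Arguments.
Unset Strict Implicit.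
Local Open Scope R_scope.

Lemma cis_add a b : Cmult (cis a) (cis b) = cis (a + b).
Proof. by rewrite /cis /Cmult /= cos_plus sin_plus; f_equal; ring. Qed.

Lemma cis_PI : cis PI = (-1, 0).
Proof. by rewrite /cis cos_PI sin_PI. Qed.

Lemma cis_subPI a : cis (a - PI) = (- fst (cis a), - snd (cis a)).
Proof.
by rewrite /cis /Rminus cos_plus sin_plus cos_neg sin_neg cos_PI sin_PI /=; f_equal; ring.
Qed.

Lemma cis_period x (k : Z) : cis (x + 2 * IZR k * PI) = cis x.
Proof.
have cis_periodN n y : cis (y + 2 * INR n * PI) = cis y.
  by rewrite /cis cos_period sin_period.
case: (Z_le_gt_dec 0 k) => Hk.
- by rewrite -(Z2Nat.id k) // -INR_IZR_INZ cis_periodN.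
- rewrite -(Z.opp_involutive k) -(Z2Nat.id (- k)); last lia.
  rewrite opp_IZR -INR_IZR_INZ -(cis_periodN (Z.to_nat (- k))).
  by f_equal; ring.
Qed.

Lemma PV_shift th : exists k : Z, PV th = th + 2 * IZR k * PI.
Proof.
by exists (- Int_part ((th + PI) / (2 * PI)))%Z; rewrite /PV /Rmod opp_IZR; ring.
Qed.

Lemma unit_vector_polar (c s : R) : c * c + s * s = 1 ->
  exists th, - PI <= th < PI /\ cos th = c /\ sin th = s.
Proof.
move=> Hcs.
have Hc : -1 <= c <= 1 by split; nra.
have Hsin : sqrt (1 - c²) = Rabs s.
  by rewrite -sqrt_Rsqr_abs; f_equal; rewrite /Rsqr; lra.
have [Hacos0 HacosPI] := acos_bound c.
have HPI := PI_RGT_0.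
case: (Rle_lt_dec 0 s) => Hs.
- case: (Req_dec c (-1)) => Hc1.
  + exists (- PI); rewrite cos_neg sin_neg cos_PI sin_PI; split; first lra.
    by split; nra.
  + exists (acos c); split; last by rewrite cos_acos // sin_acos // Hsin Rabs_pos_eq.
    split; first lra.
    case: (Rle_lt_or_eq_dec _ _ HacosPI) => // HPIc.
    by case: Hc1; rewrite -(cos_acos c) // HPIc cos_PI.
- exists (- acos c); split; first lra.
  by rewrite cos_neg sin_neg cos_acos // sin_acos // Hsin Rabs_left //; split; lra.
Qed.

Lemma vangle_spec x : x <> (0, 0) ->
  vnorm x * cos (vangle x) = fst x /\ vnorm x * sin (vangle x) = snd x.
Proof.
move=> Hx.
have Hpos : 0 < fst x * fst x + snd x * snd x.
  case: x Hx => a b /= Hx.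
  case: (Req_dec a 0) => [Ha|]; case: (Req_dec b 0) => [Hb|]; try nra.
  by case: Hx; rewrite Ha Hb.
set n := vnorm x.
have Hn : 0 < n by apply: sqrt_lt_R0.
have Hnn : n * n = fst x * fst x + snd x * snd x by rewrite sqrt_sqrt; lra.
have [th [Hth [Hc Hs]]] : exists th, - PI <= th < PI /\
    cos th = fst x / n /\ sin th = snd x / n.
  apply: unit_vector_polar.
  have -> : fst x / n * (fst x / n) + snd x / n * (snd x / n) =
            (fst x * fst x + snd x * snd x) / (n * n) by field; lra.
  by rewrite -Hnn; field; lra.
rewrite /vangle -/n; match goal with |- context [epsilon ?i ?P] =>
  case: (epsilon_spec i P) => [|_ //] end.
exists th; split => //; rewrite Hc Hs; split; field; lra.
Qed.

Section Bearings.
Variables (N : nat) (p : 'I_N -> R * R).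
Hypothesis p_inj : injective p.

Lemma bearing_unit (v u : 'I_N) : u != v ->
  bearing p v u <> (0, 0) /\ vnorm (bearing p v u) = 1.
Proof.
move=> Huv; rewrite /bearing /=.
set d1 := fst (p v) - fst (p u); set d2 := snd (p v) - snd (p u).
have Hd : 0 < d1 * d1 + d2 * d2.
  case: (Req_dec d1 0) => H1; case: (Req_dec d2 0) => H2; try nra.
  case/eqP: Huv; apply: p_inj.
  move: H1 H2; rewrite /d1 /d2; case: (p u) => a b; case: (p v) => c d /= ? ?.
  by f_equal; lra.
set n := vnorm (d1, d2).
have Hn : 0 < n by apply: sqrt_lt_R0.
have Hnn : n * n = d1 * d1 + d2 * d2 by rewrite sqrt_sqrt /=; lra.
split.
- case=> H1 H2.
  have : d1 = 0 /\ d2 = 0.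
    by split; [have := Rmult_eq_compat_r n _ _ H1 | have := Rmult_eq_compat_r n _ _ H2];
      rewrite /Rdiv Rmult_assoc Rinv_l; lra.
  nra.
- rewrite {1}/vnorm /= -sqrt_1; f_equal.
  by apply: (Rmult_eq_reg_r (n * n)); [field_simplify; lra | nra].
Qed.

Lemma cis_bangle (v u : 'I_N) : u != v -> cis (bangle p v u) = bearing p v u.
Proof.
move=> Huv; have [H0 H1] := bearing_unit Huv.
move: (vangle_spec H0); rewrite H1 !Rmult_1_l /cis /bangle => -[-> ->].
by case: (bearing p v u).
Qed.

Lemma bearing_swap (v u : 'I_N) :
  bearing p u v = (- fst (bearing p v u), - snd (bearing p v u)).
Proof.
rewrite /bearing /vnorm /=.
have -> : (fst (p u) - fst (p v)) * (fst (p u) - fst (p v)) +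
          (snd (p u) - snd (p v)) * (snd (p u) - snd (p v)) =
          (fst (p v) - fst (p u)) * (fst (p v) - fst (p u)) +
          (snd (p v) - snd (p u)) * (snd (p v) - snd (p u)) by ring.
by rewrite /Rdiv; f_equal; ring.
Qed.

(* e^{-i (alpha^v_{wu} + pi)} turns g_{wv} into -g_{uv} = g_{vu}; for w = u the
   weight e^{i pi} reverses g_{uv} directly. *)
Lemma theta_rel_rotates (M : nat) (lab : 'I_M -> vbar N * vbar N) (k j : 'I_M) :
  rho (lab k).1 != rho (lab k).2 ->
  nbr lab k j -> Cmult (cis (- theta_rel p lab j k)) (ztrue p lab j) = ztrue p lab k.
Proof.
rewrite /nbr /theta_rel /ztrue /theta => Hk /eqP <-.
set u := rho (lab k).1 in Hk *; set v := rho (lab k).2 in Hk *.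
set w := rho (lab j).2.
have Hvu := cis_bangle Hk; rewrite eq_sym in Hk; have Huv := cis_bangle Hk.
case: eqP => [-> | _].
- rewrite Ropp_involutive cis_PI Huv bearing_swap Hvu.
  by case: (bearing p v u) => a b; rewrite /Cmult /=; f_equal; ring.
- case: (PV_shift (alpha p v w u + PI)) => m ->.
  case: (PV_shift (bangle p w v - bangle p u v)) => m' Halpha.
  rewrite /alpha Halpha cis_add.
  have -> : - (bangle p w v - bangle p u v + 2 * IZR m' * PI + PI + 2 * IZR m * PI)
            + bangle p w v = (bangle p u v - PI) + 2 * IZR (- m - m') * PI.
    by rewrite minus_IZR opp_IZR; ring.
  by rewrite cis_period cis_subPI Huv Hvu bearing_swap /= !Ropp_involutive.
Qed.
End Bearings.

Section Depth.
Variables (T : finType) (e : rel T) (l : T).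

Fixpoint reaches_within (n : nat) (k : T) : bool :=
  (k == l) || (if n is n'.+1 then [exists j, e k j && reaches_within n' j] else false).

Lemma connect_reaches_within k : connect e k l -> exists n, reaches_within n k.
Proof.
case/connectP => q; elim: q k => [|j q IHq] k /=.
- by move=> _ <-; exists 0%N; rewrite /= eqxx.
- case/andP => ekj Hq Hlast; have [n Hn] := IHq j Hq Hlast.
  by exists n.+1; apply/orP; right; apply/existsP; exists j; rewrite ekj.
Qed.

Lemma descending_depth : (forall k, connect e k l) ->
  exists d : T -> nat, forall k, k != l -> exists2 j, e k j & (d j < d k)%N.
Proof.
move=> Hconn.
exists (fun k => ex_minn (connect_reaches_within (Hconn k))) => k Hkl.
case: ex_minnP => -[|n] /=; rewrite (negbTE Hkl) //= => /existsP [j /andP [ekj Hj]] _.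
exists j => //; case: ex_minnP => m _ Hmin; exact: leq_ltn_trans (Hmin _ Hj) _.
Qed.
End Depth.

Section EdgeLocalization.
Variables (N : nat) (S : 'I_N -> 'I_N -> 'I_N -> bool).
Hypothesis S_distinct : forall u w v, S u w v -> [/\ u != w, u != v & w != v].

Lemma meas_neq u v : meas S u v -> u != v.
Proof. by case/existsP => w /S_distinct []. Qed.

Lemma ebar_rho_neq a b : ebar S a b -> rho a != rho b.
Proof.
case: a => [u|[u' v]]; case: b => [v'|[u'' v']] //=.
- by case/andP => /meas_neq.
- by case/andP => /andP [_ /orP [/meas_neq | /meas_neq]] //; rewrite eq_sym.
- by case/andP => /andP [/eqP <- /orP [/meas_neq | /meas_neq]] //; rewrite eq_sym.
Qed.

Lemma ebar_inVbar a b : ebar S a b -> inVbar S b.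
Proof.
case: a => [u|[u' v]]; case: b => [w|[u'' v']] //=.
- by case/andP => _ Hwu; apply/existsP; exists u.
- by case/andP => /andP [/eqP -> ->] ->.
- by case/andP => /andP [_ /orP [Hvu _ | Huv /negP //]]; apply/existsP; exists v.
Qed.

Variables (M : nat) (lab : 'I_M -> vbar N * vbar N).
Hypothesis lab_bij : is_labelling S lab.

Lemma lab_ebar k : ebar S (lab k).1 (lab k).2.
Proof. by apply/(proj2 lab_bij (lab k)); exists k. Qed.

Lemma connect_nbr_tree_root (T : rel (vbar N)) (r v1 : vbar N) (l : 'I_M) :
  oriented_spanning_tree S T r -> lab l = (r, v1) ->
  forall k, connect (nbr lab) k l.
Proof.
move=> [_ [T_ebar [_ T_root]]] Hl.
have along_path q b k : path T b q -> r = last b q -> (lab k).2 = b ->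
    connect (nbr lab) k l.
  elim: q b k => [|c q IHq] b k /=.
  - by move=> _ Hrb Hk; apply: connect1; rewrite /nbr Hk Hl Hrb.
  - case/andP => Tbc Hq Hlast Hk.
    have [j Hj] := proj1 (proj2 lab_bij (b, c)) (T_ebar _ _ Tbc).
    apply: (connect_trans (y := j)); first by apply: connect1; rewrite /nbr Hk Hj.
    by apply: (IHq c) => //; rewrite Hj.
move=> k; case: (eqVneq (lab k).2 r) => [Hr | Hr]; first exact: (along_path [::] r).
have /connectP [q Hq Hlast] := T_root _ (ebar_inVbar (lab_ebar k)) Hr.
exact: along_path Hq Hlast _.
Qed.
End EdgeLocalization.

Lemma ball_Rabs (x y : R) (e : posreal) : ball x e y <-> Rabs (y - x) < e.
Proof. by []. Qed.

Lemma filter_forall_fin {T : Type} {G : (T -> Prop) -> Prop} {FG : Filter G}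
    (I : finType) (A : pred I) (P : T -> I -> Prop) :
  (forall j, A j -> G (fun y => P y j)) -> G (fun y => forall j, A j -> P y j).
Proof.
move=> HG.
suff /(_ (enum I)) : forall s : seq I, G (fun y => forall j, j \in s -> A j -> P y j).
  by apply: filter_imp => y Hy j; apply: Hy; rewrite mem_enum.
elim=> [|i s IHs]; first exact: filter_forall.
case: (boolP (A i)) => Ai.
- apply: filter_imp (filter_and _ _ IHs (HG i Ai)) => y [Hs Hi] j.
  by rewrite inE => /orP [/eqP -> | /Hs].
- apply: filter_imp IHs => y Hs j; rewrite inE => /orP [/eqP -> Ai' | /Hs //].
  by rewrite Ai' in Ai.
Qed.

Lemma filterlim_eventually_lt {G : (R -> Prop) -> Prop} (f : R -> R) (a b : R) :
  filterlim f G (locally a) -> a < b -> G (fun y => f y < b).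
Proof.
move=> Hf Hab; apply: (Hf (fun z => z < b)).
by exists (mkposreal (b - a) ltac:(lra)) => z /ball_Rabs /Rabs_def2 /=; lra.
Qed.

Lemma nonpos_of_neg_before (f : R -> R) (t0 s : R) :
  t0 < s -> filterlim f (locally s) (locally (f s)) ->
  (forall r, t0 <= r < s -> f r < 0) -> f s <= 0.
Proof.
move=> Hs Hf Hneg.
apply: (filterlim_le (F := at_left s) f (fun _ => 0) (f s) 0).
- rewrite /at_left /within /locally.
  exists (mkposreal (s - t0) ltac:(lra)) => r /ball_Rabs /Rabs_def2 /= Hr Hrs.
  by apply: Rlt_le; apply: Hneg; lra.
- by apply: filterlim_filter_le_1 Hf; apply: filter_le_within.
- exact: filterlim_const.
Qed.

Lemma is_derive_neg_before (f : R -> R) (t0 s D : R) :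
  t0 < s -> is_derive f s D -> D < 0 -> exists2 r, t0 < r < s & f s < f r.
Proof.
move=> Hs /is_derive_Reals Hf HD.
have [del Hdel] := Hf (- D / 2) ltac:(lra).
set h := Rmin del (s - t0) / 2.
have [Hh1 Hh2] := (Rmin_l del (s - t0), Rmin_r del (s - t0)).
have Hh0 : 0 < Rmin del (s - t0) by apply: Rmin_glb_lt; [exact: cond_pos | lra].
have Hh : 0 < h by rewrite /h; lra.
exists (s - h); first by rewrite /h; lra.
have /Rabs_def2 [Hq _] : Rabs ((f (s + - h) - f s) / - h - D) < - D / 2.
  apply: Hdel; first by apply: Rlt_not_eq; lra.
  by rewrite Rabs_Ropp Rabs_pos_eq /h; lra.
apply: Rnot_le_lt => Hle.
have : 0 <= (f (s + - h) - f s) / - h.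
  by rewrite /Rdiv Rinv_opp; have := Rinv_0_lt_compat h Hh; rewrite /Rminus in Hle; nra.
lra.
Qed.

Section ComparisonPrinciple.
Variables (I : finType) (A : pred I) (F : R -> I -> R) (t0 : R).
Hypothesis F_init : forall k, A k -> F t0 k < 0.
Hypothesis F_right : forall k, A k ->
  filterlim (fun s => F s k) (at_right t0) (locally (F t0 k)).
Hypothesis F_der : forall k, A k -> forall t, t0 < t -> exists D,
  is_derive (fun s => F s k) t D /\
  ((forall j, A j -> F t j <= 0) -> F t k = 0 -> D < 0).

Let F_cont k : A k -> forall t, t0 < t ->
  filterlim (fun s => F s k) (locally t) (locally (F t k)).
Proof.
by move=> Ak t Ht; have [D [HD _]] := F_der Ak Ht; apply: ex_derive_continuous; exists D.
Qed.

Let F_cont_right k : A k -> forall t, t0 <= t ->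
  filterlim (fun s => F s k) (at_right t) (locally (F t k)).
Proof.
move=> Ak t /Rle_lt_or_eq_dec [Ht | <-]; last exact: F_right.
by apply: filterlim_filter_le_1 (F_cont Ak Ht); apply: filter_le_within.
Qed.

Let neg_right s : t0 <= s -> (forall j, A j -> F s j < 0) ->
  exists2 eps, 0 < eps & forall r, s <= r < s + eps -> forall j, A j -> F r j < 0.
Proof.
move=> Hs neg_s.
have [eps Heps] : at_right s (fun y => forall j, A j -> F y j < 0).
  apply: filter_forall_fin => j Aj.
  exact: filterlim_eventually_lt (F_cont_right Aj Hs) (neg_s j Aj).
exists eps => [|r Hr]; first exact: cond_pos.
case: (Req_dec r s) => [-> // | Hrs].
by apply: Heps; [apply/ball_Rabs; rewrite Rabs_pos_eq; lra | lra].
Qed.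

Lemma first_crossing T k : t0 <= T -> A k -> 0 <= F T k ->
  exists s j, [/\ t0 < s, A j, F s j = 0, (forall i, A i -> F s i <= 0)
                & forall r, t0 <= r < s -> F r j < 0].
Proof.
move=> HT Ak HFk.
pose neg_upto s := forall r, t0 <= r <= s -> forall j, A j -> F r j < 0.
pose E s := s <= T /\ neg_upto s.
have E_t0 : E t0 by split=> // r Hr; have -> : r = t0 by lra.
have [s [Hub Hlub]] : {s | is_lub E s}.
  by apply: completeness; [exists T => ? [] | exists t0].
have [Hs0 HsT] : t0 <= s <= T by split; [apply: Hub | apply: Hlub => ? []].
have before r : t0 <= r < s -> forall j, A j -> F r j < 0.
  move=> Hr j Aj; apply: Rnot_le_lt => Hj.
  suff /Hlub : is_upper_bound E r by lra.
  move=> x [_ Hx]; apply: Rnot_lt_le => Hrx.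
  by have := Hx r ltac:(lra) j Aj; lra.
have [j0 [Aj0 Hj0]] : exists j0, A j0 /\ 0 <= F s j0.
  apply: NNPP => Hnone.
  have neg_s j : A j -> F s j < 0.
    by move=> Aj; apply: Rnot_le_lt => Hj; apply: Hnone; exists j.
  have [Hs | HsT'] := Req_dec s T; first by have := neg_s k Ak; rewrite Hs; lra.
  have [eps Heps Hneg] := neg_right Hs0 neg_s.
  pose y := s + Rmin eps (T - s) / 2.
  have [Hm1 Hm2] := (Rmin_l eps (T - s), Rmin_r eps (T - s)).
  have Hm0 : 0 < Rmin eps (T - s) by apply: Rmin_glb_lt; lra.
  suff /Hub : E y by rewrite /y; lra.
  split=> [|r Hr]; first by rewrite /y; lra.
  rewrite /y in Hr; case: (Rlt_le_dec r s) => Hrs; [apply: before | apply: Hneg]; lra.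
have Hs : t0 < s.
  case: (Rle_lt_or_eq_dec _ _ Hs0) => // Hts.
  by have := F_init Aj0; rewrite Hts; lra.
have nonpos i : A i -> F s i <= 0.
  by move=> Ai; apply: (nonpos_of_neg_before Hs (F_cont Ai Hs)) => r Hr; apply: before.
exists s, j0; split=> //; first by have := nonpos _ Aj0; lra.
by move=> r Hr; apply: before.
Qed.

Lemma comparison_principle t : t0 <= t -> forall k, A k -> F t k < 0.
Proof.
move=> Ht k Ak; apply: Rnot_le_lt => HFk.
have [s [j [Hs Aj Hsj Hnonpos Hbefore]]] := first_crossing Ht Ak HFk.
have [D [HD /(_ Hnonpos Hsj) HDneg]] := F_der Aj Hs.
have [r Hr] := is_derive_neg_before Hs HD HDneg.
by have := Hbefore r ltac:(lra); lra.
Qed.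
End ComparisonPrinciple.

Definition Cdot (a b : C) : R := fst a * fst b + snd a * snd b.
Definition sqnorm (w : C) : R := Cdot w w.

Lemma sqnorm_ge0 w : 0 <= sqnorm w.
Proof. by rewrite /sqnorm /Cdot; nra. Qed.

Lemma Cmod_sqnorm w : Cmod w = sqrt (sqnorm w).
Proof. by rewrite /Cmod /sqnorm /Cdot; f_equal; ring. Qed.

Lemma sqnorm_cis th : sqnorm (cis th) = 1.
Proof. by rewrite /sqnorm /Cdot /cis /=; have := sin2_cos2 th; rewrite /Rsqr; lra. Qed.

Lemma continuous_sqnorm_sub (z w : C) : continuous (fun v : C => sqnorm (Cminus v z)) w.
Proof.
case: w => w1 w2.
have Hfst : continuous (fun v : C => fst v + - fst z) (w1, w2).
  apply: (continuous_plus (V := R_NormedModule)); last exact: continuous_const.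
  exact: continuous_fst.
have Hsnd : continuous (fun v : C => snd v + - snd z) (w1, w2).
  apply: (continuous_plus (V := R_NormedModule)); last exact: continuous_const.
  exact: continuous_snd.
by apply: (continuous_plus (V := R_NormedModule));
  apply: (continuous_mult (K := R_AbsRing)).
Qed.

Lemma is_derive_components (f : R -> C) t (v : C) : is_derive f t v ->
  is_derive (fun s => fst (f s)) t (fst v) /\ is_derive (fun s => snd (f s)) t (snd v).
Proof.
move=> Hf; split; rewrite /is_derive.
- apply: filterdiff_ext_lin; first exact: (filterdiff_comp _ _ _ _ Hf
    (filterdiff_linear _
      (is_linear_fst (K := R_AbsRing) (U := R_NormedModule) (V := R_NormedModule)))).
  by case: v {Hf}.
- apply: filterdiff_ext_lin; first exact: (filterdiff_comp _ _ _ _ Hf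
    (filterdiff_linear _
      (is_linear_snd (K := R_AbsRing) (U := R_NormedModule) (V := R_NormedModule)))).
  by case: v {Hf}.
Qed.

Lemma is_derive_sqnorm_sub (f : R -> C) t (v z : C) : is_derive f t v ->
  is_derive (fun s => sqnorm (Cminus (f s) z)) t (2 * Cdot (Cminus (f t) z) v).
Proof.
move=> /is_derive_components [H1 H2].
have G1 := is_derive_minus _ _ _ _ _ H1 (is_derive_const (fst z) t).
have G2 := is_derive_minus _ _ _ _ _ H2 (is_derive_const (snd z) t).
have := is_derive_plus _ _ _ _ _ (is_derive_mult _ _ _ _ _ G1 G1 Rmult_comm)
                                 (is_derive_mult _ _ _ _ _ G2 G2 Rmult_comm).
rewrite /sqnorm /Cdot /Cminus /Cplus /Copp /plus /mult /minus /opp /=.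
by congr is_derive; rewrite /plus /zero /=; ring.
Qed.

Definition sumR {I : Type} (f : I -> R) (s : seq I) : R :=
  foldr (fun j acc => f j + acc) 0 s.

(* With e_j := h_j - z_j one has c h_j - h_k = c e_j - e_k, and
   2 <e_k, c e_j - e_k> = |c e_j|^2 - |e_k|^2 - |c e_j - e_k|^2. *)
Lemma Cdot_rotated_le (c zj zk hj hk : C) :
  Cmult c zj = zk -> sqnorm c = 1 ->
  2 * Cdot (Cminus hk zk) (Cminus (Cmult c hj) hk)
    <= sqnorm (Cminus hj zj) - sqnorm (Cminus hk zk).
Proof.
case: c => c1 c2; case: zj => b1 b2; case: hj => a1 a2; case: hk => h1 h2.
rewrite /sqnorm /Cdot /Cmult /Cminus /Cplus /Copp /= => <- /= Hc.
set f1 := c1 * (a1 - b1) - c2 * (a2 - b2); set f2 := c1 * (a2 - b2) + c2 * (a1 - b1).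
set e1 := h1 + - (c1 * b1 - c2 * b2); set e2 := h2 + - (c1 * b2 + c2 * b1).
have Hrot : f1 * f1 + f2 * f2 = (a1 + - b1) * (a1 + - b1) + (a2 + - b2) * (a2 + - b2).
  by rewrite -[RHS]Rmult_1_l -Hc /f1 /f2; ring.
have -> : c1 * a1 - c2 * a2 + - h1 = f1 - e1 by rewrite /f1 /e1; ring.
have -> : c1 * a2 + c2 * a1 + - h2 = f2 - e2 by rewrite /f2 /e2; ring.
have := Rle_0_sqr (f1 - e1); have := Rle_0_sqr (f2 - e2); rewrite /Rsqr; nra.
Qed.

Lemma Cdot_Csum_rotated_le (M : nat) (L : seq 'I_M) (c zj hj : 'I_M -> C) (zk hk : C) :
  (forall j, j \in L -> Cmult (c j) (zj j) = zk) -> (forall j, sqnorm (c j) = 1) ->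
  2 * Cdot (Cminus hk zk) (Csum (fun j => Cminus (Cmult (c j) (hj j)) hk) L)
    <= sumR (fun j => sqnorm (Cminus (hj j) (zj j)) - sqnorm (Cminus hk zk)) L.
Proof.
move=> Hrot Hunit; elim: L Hrot => [|j L IHL] Hrot /=; first by rewrite /Cdot /=; lra.
have := Cdot_rotated_le (hj j) hk (Hrot j (mem_head _ _)) (Hunit j).
have := IHL (fun i Hi => Hrot i (mem_behead (s := _ :: _) Hi)).
by rewrite /Cdot /Cplus /=; lra.
Qed.

Lemma sumR_le_const (J : eqType) (f : J -> R) (s : seq J) (B : R) :
  (forall j, j \in s -> f j <= B) -> sumR f s <= INR (size s) * B.
Proof.
elim: s => [|i s IHs] Hle; first by rewrite /=; lra.
rewrite [sumR _ _]/= [size _]/= S_INR; have := Hle i (mem_head _ _).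
have := IHs (fun j Hj => Hle j (mem_behead (s := _ :: _) Hj)); lra.
Qed.

Lemma sumR_le_const_but_one (J : eqType) (f : J -> R) (s : seq J) (j0 : J) (B B0 : R) :
  j0 \in s -> 0 <= B -> (forall j, j \in s -> f j <= B) -> f j0 <= B0 ->
  sumR f s <= B0 - B + INR (size s) * B.
Proof.
elim: s => [|i s IHs] // Hj0 HB Hle Hf0.
have Hle' j : j \in s -> f j <= B by move=> Hj; apply: Hle; rewrite inE Hj orbT.
rewrite [sumR _ _]/= [size _]/= S_INR; case: (eqVneq i j0) => [-> | Hij0].
- by have := sumR_le_const Hle'; lra.
- rewrite inE eq_sym (negbTE Hij0) /= in Hj0.
  by have := IHs Hj0 HB Hle' Hf0; have := Hle i (mem_head _ _); lra.
Qed.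

Lemma sumR_ge_mem (J : eqType) (f : J -> R) (s : seq J) (j0 : J) :
  j0 \in s -> (forall j, 0 <= f j) -> f j0 <= sumR f s.
Proof.
move=> Hj0 Hf; elim: s Hj0 => [|i s IHs] //=.
have Hs : 0 <= sumR f s by elim: s {IHs} => [|i' s' IH] /=; [lra | have := Hf i'; lra].
rewrite inE => /orP [/eqP <- | /IHs]; have := Hf i; lra.
Qed.

Lemma pow_le_pow_of_le1 (a : R) (m n : nat) : 0 <= a <= 1 -> (m <= n)%N -> a ^ n <= a ^ m.
Proof.
move=> Ha /subnKC <-; rewrite pow_add.
have := pow_incr a 1 (n - m) Ha; rewrite pow1.
by have := pow_le a m (proj1 Ha); nra.
Qed.

(* At a touching time x k = K (1 - a^(d k)); the neighbour j0 contributes at most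
   K (a^(d k) - a^(d j0)) <= - K a^(d k) (1/a - 1), which outweighs the other terms. *)
Lemma depth_potential_decreases (J : eqType) (L : seq J) (x : J -> R) (d : J -> nat)
    (k j0 : J) (a K mu : R) :
  0 < a -> (INR (size L) + 2) * a <= 1 -> 0 < K -> 0 <= mu <= a ^ d k ->
  j0 \in L -> (d j0 < d k)%N ->
  (forall j, x j <= K * (1 - a ^ d j)) -> x k = K * (1 - a ^ d k) ->
  sumR (fun j => x j - x k) L + mu * (K * (1 - a ^ d k)) < 0.
Proof.
move=> Ha0 Ha HK Hmu Hj0 Hdj0 Hx Hxk.
have Ha1 : 0 <= a <= 1 by have := pos_INR (size L); nra.
set b := a ^ d k in Hmu Hxk *; set P := a ^ d j0.
have Hb : 0 < b <= 1.
  by split; [apply: pow_lt | have := pow_le_pow_of_le1 Ha1 (leq0n (d k))].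
have HP : 0 < P by apply: pow_lt.
have HbP : b <= a * P.
  have [n Hn] : exists n, d k = n.+1.
    by exists (d k).-1; rewrite prednK // (leq_ltn_trans _ Hdj0).
  have : a ^ n <= P by apply: pow_le_pow_of_le1; rewrite // -ltnS -Hn.
  by rewrite /b Hn /=; nra.
have Hsum : sumR (fun j => x j - x k) L <= (K * b - K * P) - K * b + INR (size L) * (K * b).
  apply: sumR_le_const_but_one Hj0 _ _ _; first by nra.
  - by move=> j _; rewrite Hxk; have := Hx j; have := pow_lt a (d j) Ha0; nra.
  - by rewrite Hxk; have := Hx j0; rewrite -/P; nra.
have Hs := pos_INR (size L).
have Hmub : mu * (1 - b) <= b by nra.
have HsP : (INR (size L) + 1) * b < P by nra.
have := Rmult_le_compat_l K _ _ (Rlt_le _ _ HK) Hmub.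
have := Rmult_lt_compat_l K _ _ HK HsP.
nra.
Qed.

Section LeaderFollower.
Variables (M : nat) (nb : rel 'I_M) (w : 'I_M -> 'I_M -> C) (z : 'I_M -> C) (l : 'I_M).
Hypothesis w_unit : forall j k, sqnorm (w j k) = 1.
Hypothesis w_rotates : forall k j, nb k j -> Cmult (w j k) (z j) = z k.

Definition consensus_rhs (h : 'I_M -> C) (k : 'I_M) : C :=
  Csum (fun j => Cminus (Cmult (w j k) (h j)) (h k)) [seq j <- enum 'I_M | nb k j].

Variables (t0 : R) (zh : R -> 'I_M -> C).
Hypothesis zh_leader : forall t, t0 <= t -> zh t l = z l.
Hypothesis zh_dyn : forall k, k != l -> forall t, t0 < t ->
  is_derive (fun s => zh s k) t (consensus_rhs (zh t) k).
Hypothesis zh_cont : forall k, k != l ->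
  filterlim (fun s => zh s k) (at_right t0) (locally (zh t0 k)).

Definition sq_error t k := sqnorm (Cminus (zh t k) (z k)).

Lemma sq_error_leader t : t0 <= t -> sq_error t l = 0.
Proof. by move=> Ht; rewrite /sq_error zh_leader // /sqnorm /Cdot /=; ring. Qed.

Lemma sq_error_rate_le (h : 'I_M -> C) k :
  2 * Cdot (Cminus (h k) (z k)) (consensus_rhs h k)
    <= sumR (fun j => sqnorm (Cminus (h j) (z j)) - sqnorm (Cminus (h k) (z k)))
            [seq j <- enum 'I_M | nb k j].
Proof.
apply: Cdot_Csum_rotated_le => [j|j]; last exact: w_unit.
by rewrite mem_filter => /andP [/w_rotates].
Qed.

Variable d : 'I_M -> nat.
Hypothesis d_descends : forall k, k != l -> exists2 j, nb k j & (d j < d k)%N.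

Definition depth_base : R := / (INR M + 2).
Definition decay_rate : R := depth_base ^ (\max_(i : 'I_M) d i)%N.
(* As 1 - a^(d k) >= 1/2 for k <> l, the factor 2 starts every error below the barrier. *)
Definition barrier_scale : R := 2 * (sumR (sq_error t0) (enum 'I_M) + 1).
Definition barrier_amp t : R := barrier_scale * exp (- decay_rate * (t - t0)).
Definition barrier t k : R := barrier_amp t * (1 - depth_base ^ d k).

Lemma depth_base_spec : 0 < depth_base /\ (INR M + 2) * depth_base = 1.
Proof.
have := pos_INR M; rewrite /depth_base; split; first by apply: Rinv_0_lt_compat; lra.
by field; lra.
Qed.

Lemma barrier_scale_pos : 0 < barrier_scale.
Proof.
have HS : sq_error t0 l <= sumR (sq_error t0) (enum 'I_M).
  exact: sumR_ge_mem (mem_enum 'I_M l) (fun j => sqnorm_ge0 _).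
by have : 0 <= sq_error t0 l := sqnorm_ge0 _; rewrite /barrier_scale; lra.
Qed.

Lemma barrier_amp_pos t : 0 < barrier_amp t.
Proof. by apply: Rmult_lt_0_compat; [exact: barrier_scale_pos | exact: exp_pos]. Qed.

Lemma is_derive_barrier k t :
  is_derive (fun s => barrier s k) t (- decay_rate * barrier t k).
Proof. by rewrite /barrier /barrier_amp; auto_derive => //; rewrite /Rminus; ring. Qed.

Lemma sq_error_init_below_barrier k : k != l -> sq_error t0 k < barrier t0 k.
Proof.
move=> Hk; have [Ha0 Ha] := depth_base_spec; have HM := pos_INR M.
have [j _ Hdj] := d_descends Hk.
have Hpow : depth_base ^ d k <= depth_base.
  rewrite -[X in _ <= X]pow_1.
  by apply: pow_le_pow_of_le1 => //; [nra | exact: leq_ltn_trans Hdj].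
have HS : sq_error t0 k <= sumR (sq_error t0) (enum 'I_M).
  exact: sumR_ge_mem (mem_enum 'I_M k) (fun j => sqnorm_ge0 _).
have He : 0 <= sq_error t0 k by apply: sqnorm_ge0.
rewrite /barrier /barrier_amp /barrier_scale Rminus_diag Rmult_0_r exp_0 Rmult_1_r.
set S := sumR _ _ in HS *.
have Hhalf : 0 <= 1 - 2 * depth_base ^ d k by nra.
have : 2 * (S + 1) * (1 - depth_base ^ d k) >= S + 1 by nra.
lra.
Qed.

Lemma is_derive_barrier_gap k t : k != l -> t0 < t ->
  is_derive (fun s => sq_error s k - barrier s k) t
    (2 * Cdot (Cminus (zh t k) (z k)) (consensus_rhs (zh t) k) + decay_rate * barrier t k).
Proof.
move=> Hk Ht.
have := is_derive_minus _ _ _ _ _ (is_derive_sqnorm_sub (z k) (zh_dyn Hk Ht))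
  (is_derive_barrier k t).
rewrite /minus /plus /opp /=; congr is_derive.
by rewrite -Ropp_mult_distr_l Ropp_involutive.
Qed.

Lemma barrier_gap_rate_neg k t : k != l -> t0 <= t ->
  (forall j, j != l -> sq_error t j <= barrier t j) -> sq_error t k = barrier t k ->
  2 * Cdot (Cminus (zh t k) (z k)) (consensus_rhs (zh t) k) + decay_rate * barrier t k < 0.
Proof.
move=> Hk Ht Hbelow Htouch.
have [Ha0 Ha] := depth_base_spec; have HM := pos_INR M.
have Hbase1 : 0 <= depth_base <= 1 by nra.
set L := [seq j <- enum 'I_M | nb k j].
have [j0 Hj0 Hdj0] := d_descends Hk.
have HL : (INR (size L) + 2) * depth_base <= 1.
  rewrite -Ha; apply: Rmult_le_compat_r; first lra.
  apply: Rplus_le_compat_r; apply: le_INR; apply/leP.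
  by rewrite size_filter -[X in (_ <= X)%N]size_enum_ord count_size.
have := sq_error_rate_le (zh t) k; rewrite -/L => Hrate.
suff : sumR (fun j => sq_error t j - sq_error t k) L
         + decay_rate * (barrier_amp t * (1 - depth_base ^ d k)) < 0.
  by move: Hrate; rewrite /barrier /sq_error; lra.
apply: (depth_potential_decreases (j0 := j0)) => //; first exact: barrier_amp_pos.
- split; rewrite /decay_rate; first by apply: pow_le; lra.
  by apply: pow_le_pow_of_le1 => //; exact: leq_bigmax.
- by rewrite mem_filter Hj0 mem_enum.
- move=> j; case: (eqVneq j l) => [-> | Hj]; last exact: Hbelow.
  rewrite sq_error_leader //; apply: Rmult_le_pos; first exact: Rlt_le (barrier_amp_pos t).
  by have := pow_le_pow_of_le1 Hbase1 (leq0n (d l)); rewrite pow_O; lra.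
Qed.

Lemma sq_error_below_barrier t : t0 <= t -> forall k, k != l -> sq_error t k < barrier t k.
Proof.
move=> Ht k Hk; suff : sq_error t k - barrier t k < 0 by lra.
move: Ht k Hk; apply: (comparison_principle (F := fun t k => sq_error t k - barrier t k)
  (A := fun k => k != l)).
- by move=> k /sq_error_init_below_barrier; lra.
- move=> k Hk.
  have Herr := filterlim_comp _ _ _ _ _ _ _ _ (zh_cont Hk)
    (@continuous_sqnorm_sub (z k) (zh t0 k)).
  have Hbar : filterlim (fun s => - barrier s k) (at_right t0) (locally (- barrier t0 k)).
    have Hcont : continuous (fun s => - barrier s k) t0.
      by apply: ex_derive_continuous; rewrite /barrier /barrier_amp; auto_derive.
    by apply: filterlim_filter_le_1 Hcont; apply: filter_le_within.
  exact: (filterlim_comp_2 _ _ plus Herr Hbar (filterlim_plus (V := R_NormedModule) _ _)).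
- move=> k Hk s Hs; eexists; split; first exact: is_derive_barrier_gap.
  move=> Hbelow Htouch; apply: barrier_gap_rate_neg => //; try lra.
  by move=> j /Hbelow; lra.
Qed.

Theorem leader_follower_exp_convergence : exists c lam : R, 0 < lam /\
  forall t, t0 <= t -> forall k, Cmod (Cminus (zh t k) (z k)) <= c * exp (- lam * (t - t0)).
Proof.
have [Ha0 _] := depth_base_spec; have Hrate : 0 < decay_rate by apply: pow_lt.
exists (sqrt barrier_scale), (decay_rate / 2); split=> [|t Ht k]; first lra.
set E := exp (- (decay_rate / 2) * (t - t0)).
have HE : Rsqr E = exp (- decay_rate * (t - t0)).
  by rewrite /Rsqr /E -exp_plus; f_equal; field.
have -> : sqrt barrier_scale * E = sqrt (barrier_amp t).
  rewrite /barrier_amp -HE sqrt_mult; [| exact: Rlt_le barrier_scale_pos | exact: Rle_0_sqr].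
  by rewrite sqrt_Rsqr // /E; exact: Rlt_le (exp_pos _).
rewrite Cmod_sqnorm; apply: sqrt_le_1_alt.
have := barrier_amp_pos t; case: (eqVneq k l) => [-> | Hk].
  by rewrite [sqnorm _]sq_error_leader //; lra.
have := sq_error_below_barrier Ht Hk; have := pow_lt _ (d k) Ha0.
by rewrite /barrier /sq_error; nra.
Qed.
End LeaderFollower.

Theorem theorem4
  (N : nat) (p : 'I_N -> R * R) (S : 'I_N -> 'I_N -> 'I_N -> bool)
  (* agents at distinct positions *)
  (Hp : injective p)
  (* subtended angles are between three distinct agents, and
     alpha^u_{wv} \in S iff alpha^u_{vw} \in S *)
  (HSdist : forall u w v, S u w v -> [/\ u != w, u != v & w != v])
  (HSsym : forall u w v, S u w v = S u v w)
  (* standing assumption: the measurements at each agent relate all the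
     bearing vectors involved in them *)
  (Hstand : forall u v w, meas S u v -> meas S u w -> connect (S u) v w)
  (* the communication graph is connected *)
  (Hconn : forall u v : 'I_N, connect (commE S) u v)
  (M : nat) (lab : 'I_M -> vbar N * vbar N)
  (Hlab : is_labelling S lab)
  (* Gbar has an oriented spanning tree with root r; v1 a neighbour of r *)
  (r v1 : vbar N)
  (Htree : exists T, oriented_spanning_tree S T r)
  (Hv1 : ebar S r v1)
  (l : 'I_M) (Hl : lab l = (r, v1))
  (* estimation dynamics *)
  (t0 : R) (zh : R -> 'I_M -> C)
  (Hfix : forall t, t0 <= t -> zh t l = ztrue p lab l)
  (Hdyn : forall k, k != l -> forall t, t0 < t ->
            is_derive (fun s => zh s k) t (est_rhs p lab (zh t) k))
  (Hcont : forall k, k != l ->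
            filterlim (fun s => zh s k) (at_right t0) (locally (zh t0 k))) :
  exists c lam : R, 0 < lam /\
    forall t, t0 <= t -> forall k : 'I_M,
      Cmod (Cminus (zh t k) (ztrue p lab k)) <= c * exp (- lam * (t - t0)).
Proof.
have [T HT] := Htree.
have [d Hd] := descending_depth (connect_nbr_tree_root Hlab HT Hl).
have rotates k j : nbr lab k j ->
    Cmult (cis (- theta_rel p lab j k)) (ztrue p lab j) = ztrue p lab k.
  exact: (theta_rel_rotates Hp (ebar_rho_neq HSdist (lab_ebar Hlab k))).
exact: (leader_follower_exp_convergence (fun j k => sqnorm_cis _) rotates
          Hfix Hdyn Hcont Hd).
Qed.
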